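(* Assume $p=m$, $D=0$, and $\mathrm{rank}\begin{bmatrix} I-A & B\\ C & 0\end{bmatrix}=n+m$. Let $(X,U)$ be a minimizer of Problem 3, let $(K,H,G,F)$ be the unique solution of $\begin{bmatrix} K & H \\ G & F \end{bmatrix}\begin{bmatrix} X \\ Z \end{bmatrix} = \begin{bmatrix} U \\ V \end{bmatrix}$, assume $\det(I-(A+BK))\neq0$ and $\det(I-F)\neq0$, and set $M=\big(C(I-(A+BK))^{-1}B\big)^{-1}$, $L=-G(I-(A+BK))^{-1}BM$. Let $r(t)$ be a step reference with $r(t)=r_-$ for $t<0$ and $r(t)=r_+$ for $t\ge 0$ ($r_\pm\in\mathbb{R}^m$ constant). Then for every initial state $x_0\in\mathbb{R}^n$, the closed loop of the plant with the tracking compensator $z_r(t+1)=Fz_r(t)+Gx(t)+Lr(t)$, $u(t)=Hz_r(t)+Kx(t)+Mr(t)$, $z_r(0)=0$, satisfies $\lim_{t\to\infty}\|y(t)-r(t)\|_2=0$ (zero steady-state tracking error).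
   Context: Plant: $x(t+1)=Ax(t)+Bu(t)$, $x(0)=x_0$, $y(t)=Cx(t)$, with $x\in\mathbb{R}^n$, $u,y\in\mathbb{R}^m$, $(A,B)$ reachable, horizon $N\ge 2$. $P\in\mathbb{R}^{N\times N}$ is the nilpotent shift matrix $P=\begin{bmatrix}0 & 0\\ I_{N-1} & 0\end{bmatrix}$; $\otimes$ is the Kronecker product; $\mathrm{e}_1\in\mathbb{R}^N$; $\|W\|_1=\sum_{i,j}|w_{ij}|$. Problem 3 (minimum attention control): minimize $\|U(P\otimes I_n)-U\|_1$ over $X\in\mathbb{R}^{n\times nN}$, $U\in\mathbb{R}^{m\times nN}$ subject to $AX+BU=X(P\otimes I_n)$ and $X(\mathrm{e}_1\otimes I_n)=I_n$. $Z=\begin{bmatrix}0_{n(N-1)\times n} & I_{n(N-1)}\end{bmatrix}$, $V=Z(P\otimes I_n)$. *)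

From HB Require Import structures.
From mathcomp Require Import all_boot all_order all_algebra.
From mathcomp Require Import mxtens.
From mathcomp Require Import all_classical all_reals all_analysis.
Set Implicit Arguments. Unset Strict Implicit. Unset Printing Implicit Defensive.
Import Order.TTheory GRing.Theory Num.Theory.
Local Open Scope ring_scope.

Section Defs.
Variable R : realType.

Definition shiftP (N : nat) : 'M[R]_N := \matrix_(i, j) ((i : nat) == j.+1)%:R.

Definition e1 (N : nat) : 'cV[R]_N := \col_i ((i : nat) == 0%N)%:R.

Definition PkronI (N n : nat) : 'M[R]_(N * n) := tensmx (shiftP N) (1%:M : 'M[R]_n).

Definition Xe1 (n N : nat) (X : 'M[R]_(n, N * n)) : 'M[R]_n :=
  castmx (erefl n, mul1n n) (X *m tensmx (e1 N) (1%:M : 'M[R]_n)).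

Definition norm1 (p q : nat) (W : 'M[R]_(p, q)) : R := \sum_i \sum_j `|W i j|.

Definition norm2 (p : nat) (v : 'cV[R]_p) : R := Num.sqrt (\sum_i (v i 0) ^+ 2).

Definition p3_feasible (n m N : nat) (A : 'M[R]_n) (B : 'M[R]_(n, m))
  (X : 'M[R]_(n, N * n)) (U : 'M[R]_(m, N * n)) : Prop :=
  A *m X + B *m U = X *m PkronI N n /\ Xe1 X = 1%:M.

Definition p3_cost (n m N : nat) (U : 'M[R]_(m, N * n)) : R :=
  norm1 (U *m PkronI N n - U).

Definition p3_minimizer (n m N : nat) (A : 'M[R]_n) (B : 'M[R]_(n, m))
  (X : 'M[R]_(n, N * n)) (U : 'M[R]_(m, N * n)) : Prop :=
  p3_feasible A B X U /\
  forall (X' : 'M[R]_(n, N * n)) (U' : 'M[R]_(m, N * n)), p3_feasible A B X' U' -> p3_cost U <= p3_cost U'.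

Definition Zmx (n N : nat) : 'M[R]_(n * N.-1, N * n) :=
  \matrix_(i, j) ((j : nat) == (n + i)%N)%:R.

Definition Vmx (n N : nat) : 'M[R]_(n * N.-1, N * n) := Zmx n N *m PkronI N n.

Fixpoint plant_traj (n m : nat) (A : 'M[R]_n) (B : 'M[R]_(n, m))
  (x0 : 'cV[R]_n) (u : nat -> 'cV[R]_m) (t : nat) : 'cV[R]_n :=
  match t with
  | 0 => x0
  | t'.+1 => A *m plant_traj A B x0 u t' + B *m u t'
  end.

Definition reachable (n m : nat) (A : 'M[R]_n) (B : 'M[R]_(n, m)) : Prop :=
  forall xf : 'cV[R]_n, exists (T : nat) (u : nat -> 'cV[R]_m),
    plant_traj A B 0 u T = xf.

Definition step_ref (m : nat) (rm rp : 'cV[R]_m) (t : int) : 'cV[R]_m :=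
  if t < 0 then rm else rp.

Fixpoint closed_loop (n m q : nat) (A : 'M[R]_n) (B : 'M[R]_(n, m))
  (K : 'M[R]_(m, n)) (H : 'M[R]_(m, q)) (G : 'M[R]_(q, n)) (F : 'M[R]_q)
  (L : 'M[R]_(q, m)) (M : 'M[R]_m) (r : int -> 'cV[R]_m) (x0 : 'cV[R]_n)
  (t : nat) : 'cV[R]_n * 'cV[R]_q :=
  match t with
  | 0 => (x0, 0)
  | t'.+1 =>
    let xz := closed_loop A B K H G F L M r x0 t' in
    let u := H *m xz.2 + K *m xz.1 + M *m r (t'%:Z) in
    (A *m xz.1 + B *m u, F *m xz.2 + G *m xz.1 + L *m r (t'%:Z))
  end.

End Defs.

From HB Require Import structures.
From mathcomp Require Import all_boot all_order all_algebra.
From mathcomp Require Import mxtens.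
From mathcomp Require Import all_classical all_reals all_analysis.
Import Order.TTheory GRing.Theory Num.Theory.
Import numFieldNormedType.Exports.
Local Open Scope classical_set_scope.
Local Open Scope ring_scope.
Set Implicit Arguments. Unset Strict Implicit.

(* The tracking compensator is in fact deadbeat: the tracking error is exactly
   zero from time N on, so the limit is that of an eventually-zero sequence.

   With A_K = A + B K, the pair
   (x_s, 0), x_s = (I - A_K)^-1 B M r_+, is an equilibrium of the closed loop
   (the choice of L is what keeps the compensator state at 0), and the
   deviation e(t) from it obeys e(t+1) = A_cl e(t), A_cl = [A_K, BH; G, F].
   The constraints of Problem 3 together with the defining equation of
   (K, H, G, F) give A_cl W = W (P (x) I) for W = [X; Z], and
   e(0) = W (e_1 (x) I) (x_0 - x_s).  Hence e(t) = W (P (x) I)^t (...),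
   which vanishes for t >= N since P (x) I is nilpotent of index N.
   The rank condition makes the DC gain C (I - A_K)^-1 B invertible (a
   Schur-complement argument), so M is its inverse and C x_s = r_+.

   Only feasibility of (X, U) is needed, not its
   optimality. *)

Lemma iter_mulmx_intertwine (R : pzRingType) (p k : nat)
    (Acl : 'M[R]_p) (P : 'M[R]_k) (W : 'M[R]_(p, k)) (v : 'cV[R]_k) (t : nat) :
  Acl *m W = W *m P ->
  iter t (mulmx Acl) (W *m v) = W *m iter t (mulmx P) v.
Proof.
by move=> AW; elim: t => [|t IH] //=; rewrite IH !mulmxA AW.
Qed.

Section ShiftKronecker.
Variable R : realType.

Lemma PkronI_subdiag (N n : nat) (k j : 'I_(N * n)) :
  PkronI R N n k j != 0 -> (k %/ n = (j %/ n).+1)%N.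
Proof.
rewrite /PkronI /tensmx /shiftP !mxE.
by case: (_ =P (j %/ n).+1) => [//|_]; rewrite mul0r eqxx.
Qed.

Lemma iter_PkronI_low (N n : nat) (w : 'cV[R]_(N * n)) (t : nat)
    (k : 'I_(N * n)) :
  (k %/ n < t)%N -> (iter t (mulmx (PkronI R N n)) w) k 0 = 0.
Proof.
elim: t k => [|t IH] k //= hk.
rewrite mxE big1 // => j _.
have [->|nz] := eqVneq (PkronI R N n k j) 0; first by rewrite mul0r.
by rewrite IH ?mulr0 //; move: hk; rewrite (PkronI_subdiag nz).
Qed.

Lemma iter_PkronI_nilpotent (N n : nat) (w : 'cV[R]_(N * n)) (t : nat) :
  (N <= t)%N -> iter t (mulmx (PkronI R N n)) w = 0.
Proof.
move=> leNt; apply/matrixP => k i; rewrite (ord1 i) mxE iter_PkronI_low //.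
exact: leq_trans (mxtens_index_proof1 k) leNt.
Qed.

Definition Emx (N n : nat) : 'M[R]_(N * n, n) :=
  castmx (erefl _, mul1n n) (tensmx (e1 R N) (1%:M : 'M[R]_n)).

Lemma Xe1E (n N : nat) (X : 'M[R]_(n, N * n)) : Xe1 X = X *m Emx N n.
Proof. by rewrite /Xe1 castmx_mul castmx_id. Qed.

(* Z selects the blocks 2..N, hence annihilates the first block. *)
Lemma Zmx_Emx (n N : nat) : Zmx R n N *m Emx N n = 0.
Proof.
apply/matrixP => i j; rewrite !mxE big1 // => k _.
rewrite !mxE castmxE !mxE /=.
case: eqP => [hk|]; last by rewrite mul0r.
rewrite (_ : (_ %/ n == 0)%N = false) ?mul0r ?mulr0 //.
rewrite /= hk; case: n i j {k hk} => [|n] i j; first by case: j.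
by rewrite divnDl ?dvdnn // divnn.
Qed.

End ShiftKronecker.

(* Schur complement: if [I - A, B; C, 0] is invertible and I - (A + B K) is
   invertible, then the DC gain C (I - (A + B K))^-1 B is invertible.  This is
   what makes M the inverse of the DC gain. *)
Lemma dc_gain_unit (R : fieldType) (n m : nat) (A : 'M[R]_n)
    (B : 'M[R]_(n, m)) (C : 'M[R]_(m, n)) (K : 'M[R]_(m, n)) :
  \rank (block_mx (1%:M - A) B C (0 : 'M[R]_m)) = (n + m)%N ->
  (1%:M - (A + B *m K)) \in unitmx ->
  C *m invmx (1%:M - (A + B *m K)) *m B \in unitmx.
Proof.
move=> full_rank AKu.
set AK := 1%:M - (A + B *m K); set S := C *m invmx AK *m B.
have Mu : block_mx (1%:M - A) B C (0 : 'M[R]_m) \in unitmx.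
  by rewrite -row_free_unit /row_free full_rank eqxx.
(* block LU factorisation after the feedback change of variables u = K x + v *)
have factor : block_mx (1%:M - A) B C (0 : 'M[R]_m) *m block_mx 1%:M 0 (- K) 1%:M
   = block_mx 1%:M 0 (C *m invmx AK) 1%:M *m block_mx AK B 0 (- S).
  rewrite !mulmx_block !mulmx1 !mulmx0 !mul0mx !mul1mx !addr0 !add0r mulmxN.
  by rewrite -mulmxA mulVmx // mulmx1 /S subrr /AK opprD addrA.
move: (congr1 determinant factor) Mu.
rewrite !det_mulmx det_lblock det_ublock det_lblock !det1 !mulr1 !mul1r.
rewrite !unitmxE !unitfE => ->.
by rewrite mulf_eq0 negb_or -scaleN1r detZ mulf_eq0 negb_or => /and3P[].
Qed.

Section Equilibrium.
Variables (R : fieldType) (n m q : nat).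
Variables (A : 'M[R]_n) (B : 'M[R]_(n, m)) (C : 'M[R]_(m, n)).
Variables (K : 'M[R]_(m, n)) (G : 'M[R]_(q, n)) (rp : 'cV[R]_m).
Hypothesis AK_unit : (1%:M - (A + B *m K)) \in unitmx.
Hypothesis gain_unit : C *m invmx (1%:M - (A + B *m K)) *m B \in unitmx.

Let Phi := invmx (1%:M - (A + B *m K)).
Let M := invmx (C *m Phi *m B).
Let L := - (G *m Phi *m B *m M).
Let xs := Phi *m (B *m (M *m rp)).

Lemma equilibrium_state : (A + B *m K) *m xs + B *m (M *m rp) = xs.
Proof.
have : (1%:M - (A + B *m K)) *m xs = B *m (M *m rp).
  by rewrite /xs mulmxA mulmxV ?mul1mx.
by rewrite mulmxBl mul1mx => <-; rewrite addrC subrK.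
Qed.

(* L is chosen so that the compensator state is not excited at xs *)
Lemma equilibrium_compensator : G *m xs + L *m rp = 0.
Proof. by rewrite /L /xs mulNmx !mulmxA subrr. Qed.

Lemma equilibrium_output : C *m xs = rp.
Proof. by rewrite /xs !mulmxA /M mulmxV ?mul1mx. Qed.

End Equilibrium.

Section ClosedLoopError.
Variables (R : realType) (n m q : nat).
Variables (A : 'M[R]_n) (B : 'M[R]_(n, m)) (K : 'M[R]_(m, n)).
Variables (H : 'M[R]_(m, q)) (G : 'M[R]_(q, n)) (F : 'M[R]_q).
Variables (L : 'M[R]_(q, m)) (M : 'M[R]_m).
Variables (r : int -> 'cV[R]_m) (rp : 'cV[R]_m) (x0 xs : 'cV[R]_n).

Hypothesis r_const : forall t : nat, r t%:Z = rp.
Hypothesis xs_fixed : (A + B *m K) *m xs + B *m (M *m rp) = xs.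
Hypothesis z_fixed : G *m xs + L *m rp = 0.

Definition Acl : 'M[R]_(n + q) := block_mx (A + B *m K) (B *m H) G F.

Let cl := closed_loop A B K H G F L M r x0.

Lemma closed_loop_error (t : nat) :
  col_mx (cl t).1 (cl t).2 - col_mx xs 0
  = iter t (mulmx Acl) (col_mx (x0 - xs) 0).
Proof.
elim: t => [|t IH]; first by rewrite /= opp_col_mx add_col_mx subr0.
rewrite /= -IH -/cl r_const opp_col_mx !add_col_mx oppr0 !addr0 mul_block_col.
set x := (cl t).1; set z := (cl t).2.
have AKxs : (A + B *m K) *m xs = xs - B *m (M *m rp) by rewrite -[in RHS]xs_fixed addrK.
congr col_mx.
  rewrite mulmxBr AKxs opprB mulmxDl !mulmxDr !mulmxA.
  by rewrite [RHS]addrC !addrA (addrC (B *m H *m z)).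
have Lrp : L *m rp = - (G *m xs) by apply/eqP; rewrite -addr_eq0 addrC z_fixed.
by rewrite Lrp mulmxBr [RHS]addrC addrA.
Qed.

Lemma closed_loop_deadbeat (k N : nat) (P : 'M[R]_k) (W : 'M[R]_(n + q, k))
    (v0 : 'cV[R]_k) :
  Acl *m W = W *m P ->
  (forall (v : 'cV[R]_k) (t : nat), (N <= t)%N -> iter t (mulmx P) v = 0) ->
  col_mx (x0 - xs) 0 = W *m v0 ->
  forall t : nat, (N <= t)%N -> (cl t).1 = xs.
Proof.
move=> AclW P_nil init t leNt; have := closed_loop_error t.
rewrite init (iter_mulmx_intertwine _ _ AclW) P_nil // mulmx0.
by move/eqP; rewrite subr_eq0 => /eqP /eq_col_mx[].
Qed.

End ClosedLoopError.

Lemma norm2_0 (R : realType) (p : nat) : norm2 (0 : 'cV[R]_p) = 0.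
Proof. by rewrite /norm2 big1 ?sqrtr0 // => i _; rewrite mxE expr0n. Qed.

Theorem proposition1 (R : realType) (n m N : nat)
  (A : 'M[R]_n) (B : 'M[R]_(n, m)) (C : 'M[R]_(m, n))
  (X : 'M[R]_(n, N * n)) (U : 'M[R]_(m, N * n))
  (K : 'M[R]_(m, n)) (H : 'M[R]_(m, n * N.-1))
  (G : 'M[R]_(n * N.-1, n)) (F : 'M[R]_(n * N.-1))
  (rm rp : 'cV[R]_m) :
  (2 <= N)%N ->
  reachable A B ->
  \rank (block_mx (1%:M - A) B C (0 : 'M[R]_m)) = (n + m)%N ->
  p3_minimizer A B X U ->
  block_mx K H G F *m col_mx X (Zmx R n N) = col_mx U (Vmx R n N) ->
  \det (1%:M - (A + B *m K)) != 0 ->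
  \det (1%:M - F) != 0 ->
  let M := invmx (C *m invmx (1%:M - (A + B *m K)) *m B) in
  let L := - (G *m invmx (1%:M - (A + B *m K)) *m B *m M) in
  forall x0 : 'cV[R]_n,
    (fun t : nat =>
       norm2 (C *m (closed_loop A B K H G F L M (step_ref rm rp) x0 t).1
              - step_ref rm rp (t%:Z)))
      @ \oo --> (0 : R).
Proof.
move=> _ _ full_rank [[dyn X_init] _] KHGF detAK _ M L x0.
move: KHGF; rewrite mul_block_col => /eq_col_mx[KH GF].
have AK_unit : (1%:M - (A + B *m K)) \in unitmx by rewrite unitmxE unitfE.
have gain_unit := dc_gain_unit full_rank AK_unit.
have r_const (t : nat) : step_ref rm rp t%:Z = rp by rewrite /step_ref ltNge.
set xs := invmx (1%:M - (A + B *m K)) *m (B *m (M *m rp)).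
set W := col_mx X (Zmx R n N).
have AclW : Acl A B K H G F *m W = W *m PkronI R N n.
  rewrite mul_block_col mul_col_mx GF -dyn -KH; congr col_mx.
  by rewrite mulmxDl mulmxDr !mulmxA addrA.
have init : col_mx (x0 - xs) 0 = W *m (Emx R N n *m (x0 - xs)).
  by rewrite mulmxA mul_col_mx -Xe1E X_init Zmx_Emx mul_col_mx mul1mx mul0mx.
have settled := closed_loop_deadbeat r_const (equilibrium_state C rp AK_unit)
  (equilibrium_compensator A B C K G rp) AclW (@iter_PkronI_nilpotent R N n) init.
apply: cvg_near_cst; near=> t.
rewrite settled ?r_const ?(equilibrium_output rp gain_unit).
  by rewrite subrr norm2_0.
by near: t; exact: nbhs_infty_ge.
Unshelve. all: end_near.
Qed.
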